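(* Let $(B,\lfloor\cdot,\cdot\rfloor,\|\cdot\|)$ be an SSDB space with quadratic form $q$, and let $f:B\to\mathbb{R}\cup\{+\infty\}$ be a minimal element (with respect to the pointwise order) of the set of convex functions $g:B\to\mathbb{R}\cup\{+\infty\}$ satisfying $g\ge q$ on $B$. Then there is a maximally $q$-positive set $M\subset B$ such that $f=\Phi_M$.
   Context: An SSD space is a pair $(B,\lfloor\cdot,\cdot\rfloor)$ with $B$ a nonzero real vector space and $\lfloor\cdot,\cdot\rfloor$ a symmetric bilinear form; $q(b)=\frac12\lfloor b,b\rfloor$. An SSDB space is a triple $(B,\lfloor\cdot,\cdot\rfloor,\|\cdot\|)$ such that $(B,\lfloor\cdot,\cdot\rfloor)$ is an SSD space, $(B,\|\cdot\|)$ is a Banach space, and $i:B\to B^*$, $i(b)=\lfloor\cdot,b\rfloor$, is a surjective isometry onto $B^*$. A nonempty $A\subset B$ is $q$-positive if $q(b-c)\ge0$ for all $b,c\in A$; maximally $q$-positive if $q$-positive and not properly contained in another $q$-positive set. For nonempty $A$, $\Phi_A(x)=\sup_{a\in A}\{\lfloor x,a\rfloor-q(a)\}$. *)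

From HB Require Import structures.
From mathcomp Require Import all_boot all_order all_algebra.
From mathcomp Require Import all_classical all_reals all_analysis.
Set Implicit Arguments. Unset Strict Implicit. Unset Printing Implicit Defensive.
Import Order.TTheory GRing.Theory Num.Theory.
Import numFieldNormedType.Exports.
Local Open Scope classical_set_scope.
Local Open Scope ring_scope.

Section SSD.
Variables (R : realType) (B : completeNormedModType R).

Definition sym_bilinear (bf : B -> B -> R) : Prop :=
  (forall x y z : B, bf (x + y) z = bf x z + bf y z) /\
  (forall (a : R) (x y : B), bf (a *: x) y = a * bf x y) /\
  (forall x y : B, bf x y = bf y x).

Definition cont_linear_functional (phi : B -> R) : Prop :=
  (forall x y : B, phi (x + y) = phi x + phi y) /\
  (forall (a : R) (x : B), phi (a *: x) = a * phi x) /\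
  continuous phi.

(* The operator norm of the functional (fun x => bf x b) equals ||b||. *)
Definition dual_norm_eq (bf : B -> B -> R) (b : B) : Prop :=
  (forall x : B, `|bf x b| <= `|x| * `|b|) /\
  (forall e : R, 0 < e -> exists x : B, `|x| <= 1 /\ `|b| - e < `|bf x b|).

(* SSDB space: B nonzero real Banach space, bf symmetric bilinear,
   i : b |-> bf . b is a surjective isometry of B onto B^*. *)
Definition is_SSDB (bf : B -> B -> R) : Prop :=
  (exists b : B, b != 0) /\
  sym_bilinear bf /\
  (forall b : B, cont_linear_functional (fun x => bf x b)) /\
  (forall b : B, dual_norm_eq bf b) /\
  (forall phi : B -> R, cont_linear_functional phi ->
     exists b : B, forall x : B, phi x = bf x b).

Definition qform (bf : B -> B -> R) (b : B) : R := (bf b b) / 2.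

Definition q_positive (bf : B -> B -> R) (A : set B) : Prop :=
  A !=set0 /\ (forall b c, A b -> A c -> 0 <= qform bf (b - c)).

Definition max_q_positive (bf : B -> B -> R) (A : set B) : Prop :=
  q_positive bf A /\
  (forall A' : set B, q_positive bf A' -> A `<=` A' -> A' = A).

Definition Phi (bf : B -> B -> R) (A : set B) (x : B) : \bar R :=
  ereal_sup [set ((bf x a - qform bf a)%:E) | a in A].

Definition proper_convex (g : B -> \bar R) : Prop :=
  (forall x, g x != -oo%E) /\
  (forall (x y : B) (t : R), 0 <= t <= 1 ->
     (g (t *: x + (1 - t) *: y)%R <= t%:E * g x + (1 - t)%:E * g y)%E).

Definition convex_majorant_q (bf : B -> B -> R) (g : B -> \bar R) : Prop :=
  proper_convex g /\ (forall x, ((qform bf x)%:E <= g x)%E).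

Definition minimal_convex_majorant_q (bf : B -> B -> R) (f : B -> \bar R) : Prop :=
  convex_majorant_q bf f /\
  (forall g, convex_majorant_q bf g -> (forall x, (g x <= f x)%E) -> g = f).

End SSD.

(* The set M = [f = q] works.  Given b, shift f by b and subtract the affine part
   of q: this yields a convex K >= - |.|^2 / 2.  By Hahn-Banach the Moreau envelope
   of K has a linear minorant, which is bounded, hence represented through the
   isometry B ~ B^* by some d with K >= <., d> + |d|^2 / 2.  Then f dominates the
   affine function <., e> - q e for e = d + b; testing the minimality of f against
   the convex hull of f and the point (e, q e) gives f e = q e, and q (b - e) <= 0.
   Hence q <= Phi_M <= f, so f = Phi_M by minimality, and the same two inequalities
   show that M is maximally q-positive. *)

From HB Require Import structures.
From mathcomp Require Import all_boot all_order all_algebra.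
From mathcomp Require Import all_classical all_reals all_analysis.
From mathcomp Require Import ring lra.
Set Implicit Arguments. Unset Strict Implicit. Unset Printing Implicit Defensive.
Import Order.TTheory GRing.Theory Num.Theory.
Import numFieldNormedType.Exports.
Local Open Scope classical_set_scope.
Local Open Scope ring_scope.

Section RealBounds.
Variable R : realType.
Implicit Types (S : set R) (a b c m x : R).

Lemma inf_le_mem S m x : (forall y, S y -> m <= y) -> S x -> inf S <= x.
Proof. by move=> Sm Sx; apply: ge_inf => //; exists m. Qed.

Lemma le_affine_inf S m a b c : (forall y, S y -> m <= y) -> 0 <= a -> S !=set0 ->
  (forall y, S y -> c <= a * y + b) -> c <= a * inf S + b.
Proof.
move=> Sm a_ge0 S0 Sc; have [a0|a_neq0] := eqVneq a 0.
  by have [y /Sc] := S0; rewrite a0 !mul0r !add0r.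
have a_gt0 : 0 < a by rewrite lt_def a_neq0.
suff : (c - b) / a <= inf S by rewrite ler_pdivrMr // => ?; lra.
by apply: lb_le_inf => // y Sy; rewrite ler_pdivrMr //; move: (Sc y Sy); lra.
Qed.

Lemma le_scale_inf S m a c : (forall y, S y -> m <= y) -> 0 <= a -> S !=set0 ->
  (forall y, S y -> c <= a * y) -> c <= a * inf S.
Proof.
move=> Sm a_ge0 S0 Sc; rewrite -[leRHS]addr0.
by apply: le_affine_inf Sm a_ge0 S0 _ => y /Sc; rewrite addr0.
Qed.

Lemma le_inf_comb S1 S2 m1 m2 a b c :
  (forall y, S1 y -> m1 <= y) -> (forall y, S2 y -> m2 <= y) ->
  0 <= a -> 0 <= b -> S1 !=set0 -> S2 !=set0 ->
  (forall y1 y2, S1 y1 -> S2 y2 -> c <= a * y1 + b * y2) -> c <= a * inf S1 + b * inf S2.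
Proof.
move=> S1m S2m a_ge0 b_ge0 S1_neq0 S2_neq0 Sc.
apply: le_affine_inf S1m a_ge0 S1_neq0 _ => y1 S1y1; rewrite addrC.
by apply: le_affine_inf S2m b_ge0 S2_neq0 _ => y2 S2y2; rewrite addrC; exact: Sc.
Qed.

Lemma le_of_sub_eps x y c : 0 <= c ->
  (forall e, 0 < e <= 1 -> x - e * c <= y) -> x <= y.
Proof.
move=> c_ge0 Hxy; apply/ler_addgt0Pr => e e_gt0.
have d_gt0 : 0 < c + e + 1 by lra.
have e'_gt0 : 0 < e / (c + e + 1) by rewrite divr_gt0.
have e'_le1 : e / (c + e + 1) <= 1 by rewrite ler_pdivrMr //; lra.
have e'c_le : e / (c + e + 1) * c <= e.
  by rewrite mulrAC ler_pdivrMr // ler_pM2l //; lra.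
by have := Hxy _ (introT andP (conj e'_gt0 e'_le1)); lra.
Qed.

End RealBounds.

(** * Hahn-Banach *)

Section Sublinear.
Variables (R : realType) (V : lmodType R).
Implicit Types (h p : V -> R) (x y : V).

Definition sublinear h :=
  (forall x y, h (x + y) <= h x + h y) /\
  (forall (a : R) x, 0 < a -> h (a *: x) <= a * h x).

Definition linear_functional (L : V -> R) :=
  (forall x y, L (x + y) = L x + L y) /\ (forall (a : R) x, L (a *: x) = a * L x).

Lemma sublinear0 h : sublinear h -> h 0 = 0.
Proof.
move=> [_ hZ]; have := hZ 2 0 ltac:(lra); have := hZ 2^-1 0 ltac:(rewrite invr_gt0; lra).
by rewrite !scaler0; lra.
Qed.

Lemma sublinear_ge_opp h x : sublinear h -> - h (- x) <= h x.
Proof. by move=> hs; have := hs.1 x (- x); rewrite subrr (sublinear0 hs); lra. Qed.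

Lemma sublinearZ h (a : R) x : sublinear h -> 0 < a -> h (a *: x) = a * h x.
Proof.
move=> hs a_gt0; apply/eqP; rewrite eq_le hs.2 //=.
have ai_gt0 : 0 < a^-1 by rewrite invr_gt0.
have := hs.2 _ (a *: x) ai_gt0; rewrite scalerA mulVf ?gt_eqF // scale1r => le_inv.
by rewrite -(ler_pM2l ai_gt0) mulrA mulVf ?gt_eqF // mul1r.
Qed.

Lemma sublinearZ_ge0 h (a : R) x : sublinear h -> 0 <= a -> h (a *: x) = a * h x.
Proof.
move=> hs; rewrite le_eqVlt => /orP[/eqP <-|]; last exact: sublinearZ.
by rewrite scale0r mul0r sublinear0.
Qed.

Lemma sublinear_odd_linear h : sublinear h -> (forall x, h (- x) = - h x) ->
  linear_functional h.
Proof.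
move=> hs hN; have hD x y : h (x + y) = h x + h y.
  by apply/eqP; rewrite eq_le hs.1 /=; have := hs.1 (- x) (- y); rewrite -opprD !hN; lra.
split => // a x; have [a_ge0|a_lt0] := leP 0 a; first exact: sublinearZ_ge0.
have := @sublinearZ_ge0 h (- a) x hs; rewrite oppr_ge0 ltW // scaleNr hN mulNr.
by move=> /(_ isT)/oppr_inj.
Qed.

Lemma dominated_lb h p x : sublinear h -> (forall x, h x <= p x) -> - p (- x) <= h x.
Proof. by move=> hs hp; have := sublinear_ge_opp x hs; have := hp (- x); lra. Qed.

Section ChainInf.
Variables (p : V -> R) (E : set (V -> R)).
Hypothesis E_dominated : forall h, E h -> sublinear h /\ forall x, h x <= p x.
Hypothesis E_chain : forall h1 h2, E h1 -> E h2 ->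
  (forall x, h1 x <= h2 x) \/ (forall x, h2 x <= h1 x).
Hypothesis E_neq0 : E !=set0.

Definition chain_inf x := inf [set h x | h in E].

Lemma chain_inf_set_lb x v : [set h x | h in E] v -> - p (- x) <= v.
Proof. by move=> [h Eh <-]; have [hs hp] := E_dominated Eh; exact: dominated_lb. Qed.

Lemma chain_inf_le h x : E h -> chain_inf x <= h x.
Proof. by move=> Eh; apply: inf_le_mem (@chain_inf_set_lb x) _; exists h. Qed.

Lemma chain_inf_sublinear : sublinear chain_inf.
Proof.
have ne x : [set h x | h in E] !=set0 by have [h Eh] := E_neq0; exists (h x), h.
split => [x y|a x a_gt0].
- rewrite -[chain_inf x]mul1r -[chain_inf y]mul1r.
  apply: le_inf_comb (@chain_inf_set_lb x) (@chain_inf_set_lb y) ler01 ler01 (ne x) (ne y) _.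
  move=> _ _ [h1 E1 <-] [h2 E2 <-]; rewrite !mul1r.
  have [le12|le21] := E_chain E1 E2.
  + apply: le_trans (chain_inf_le _ E1) _.
    by apply: le_trans ((E_dominated E1).1.1 x y) _; rewrite lerD2l.
  + apply: le_trans (chain_inf_le _ E2) _.
    by apply: le_trans ((E_dominated E2).1.1 x y) _; rewrite lerD2r.
- apply: le_scale_inf (@chain_inf_set_lb x) (ltW a_gt0) (ne x) _ => _ [h Eh <-].
  exact: le_trans (chain_inf_le _ Eh) ((E_dominated Eh).1.2 _ _ a_gt0).
Qed.

End ChainInf.

Section ShiftInf.
Variables (h : V -> R) (x : V).
Hypothesis h_sublinear : sublinear h.

(* For minimal [h], [shift_inf = h] yields [h (- x) <= - h x] (taking [t = 1]). *)
Definition shift_inf y := inf [set h (y + t *: x) - t * h x | t in [set t : R | 0 <= t]].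

Lemma shift_inf_set_lb y z :
  [set h (y + t *: x) - t * h x | t in [set t : R | 0 <= t]] z -> - h (- y) <= z.
Proof.
move=> [t t_ge0 <-]; have := h_sublinear.1 (y + t *: x) (- y).
by rewrite addrC addKr (sublinearZ_ge0 _ h_sublinear t_ge0); lra.
Qed.

Lemma shift_inf_le y t : 0 <= t -> shift_inf y <= h (y + t *: x) - t * h x.
Proof. by move=> t_ge0; apply: inf_le_mem (@shift_inf_set_lb y) _; exists t. Qed.

Lemma shift_inf_sublinear : sublinear shift_inf.
Proof.
have ne y : [set h (y + t *: x) - t * h x | t in [set t : R | 0 <= t]] !=set0.
  by exists (h (y + 0 *: x) - 0 * h x), 0 => /=.
split => [y1 y2|a y a_gt0].
- rewrite -[shift_inf y1]mul1r -[shift_inf y2]mul1r.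
  apply: le_inf_comb (@shift_inf_set_lb y1) (@shift_inf_set_lb y2) ler01 ler01
    (ne y1) (ne y2) _ => _ _ [t1 /= t1_ge0 <-] [t2 /= t2_ge0 <-].
  rewrite !mul1r; apply: le_trans (shift_inf_le _ (addr_ge0 t1_ge0 t2_ge0)) _.
  rewrite scalerDl addrACA.
  by have := h_sublinear.1 (y1 + t1 *: x) (y2 + t2 *: x); lra.
- apply: le_scale_inf (@shift_inf_set_lb y) (ltW a_gt0) (ne y) _ => _ [t /= t_ge0 <-].
  apply: le_trans (shift_inf_le _ (mulr_ge0 (ltW a_gt0) t_ge0)) _.
  by rewrite -scalerA -scalerDr (sublinearZ _ h_sublinear a_gt0); lra.
Qed.

Lemma shift_inf_le_self y : shift_inf y <= h y.
Proof. by have := shift_inf_le y (lexx 0); rewrite scale0r addr0 mul0r subr0. Qed.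

Lemma shift_inf_opp_le : shift_inf (- x) <= - h x.
Proof.
by have := shift_inf_le (- x) ler01; rewrite scale1r addNr (sublinear0 h_sublinear); lra.
Qed.

End ShiftInf.

Lemma minimal_sublinear_linear h : sublinear h ->
  (forall g, sublinear g -> (forall x, g x <= h x) -> g = h) -> linear_functional h.
Proof.
move=> hs hmin; apply: sublinear_odd_linear => // x.
have shift_eq := hmin _ (shift_inf_sublinear x hs) (shift_inf_le_self x hs).
apply/eqP; rewrite eq_le; have := shift_inf_opp_le x hs; rewrite shift_eq => ->.
by have := sublinear_ge_opp x hs; rewrite lerNl.
Qed.

Theorem hahn_banach p : sublinear p ->
  exists L, linear_functional L /\ forall x, L x <= p x.
Proof.
move=> ps; pose T := {h : V -> R | sublinear h /\ forall x, h x <= p x}.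
pose le (s t : T) := `[< forall x, sval t x <= sval s x >].
have [||||[h [hs hp]] hmin] := @Zorn T le.
- by move=> t; apply/asboolP.
- by move=> r s t /asboolP H1 /asboolP H2; apply/asboolP => x; exact: le_trans (H2 x) (H1 x).
- move=> [s sP] [t tP] /asboolP /= H1 /asboolP /= H2.
  have st : s = t by apply/funext => x; apply/eqP; rewrite eq_le H1 H2.
  by subst t; congr exist; exact: Prop_irrelevance.
- move=> A Atot.
  pose E : set (V -> R) := fun h => h = p \/ exists2 s, A s & sval s = h.
  have E_dominated h : E h -> sublinear h /\ forall x, h x <= p x.
    by case=> [->|[s _ <-]]; [split | exact: (svalP s)].
  have E_chain h1 h2 : E h1 -> E h2 ->
      (forall x, h1 x <= h2 x) \/ (forall x, h2 x <= h1 x).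
    case=> [->|[s1 As1 <-]] [->|[s2 As2 <-]].
    + by left.
    + by right => x; exact: (svalP s2).2.
    + by left => x; exact: (svalP s1).2.
    + by have [/asboolP H|/asboolP H] := Atot _ _ As1 As2; [right|left].
  have Ep : E p by left.
  have mp x : chain_inf E x <= p x by exact: chain_inf_le E_dominated _ _ Ep.
  exists (exist _ (chain_inf E) (conj (chain_inf_sublinear E_dominated E_chain (ex_intro _ _ Ep)) mp)).
  by move=> s As; apply/asboolP => x /=; apply: (chain_inf_le E_dominated); right; exists s.
exists h; split => //; apply: minimal_sublinear_linear => // g gs gh.
have gp x : g x <= p x by exact: le_trans (gh x) (hp x).
by have := hmin (exist _ g (conj gs gp)) (asboolT gh); case.
Qed.

End Sublinear.

Section DirectionalDerivative.
Variables (R : realType) (V : lmodType R) (psi : V -> R).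
Hypothesis psi_convex : forall x y (l : R), 0 <= l <= 1 ->
  psi (l *: x + (1 - l) *: y) <= l * psi x + (1 - l) * psi y.

Definition slopes0 x := [set (psi (t *: x) - psi 0) / t | t in [set t : R | 0 < t]].

Definition dir_deriv0 x := inf (slopes0 x).

Lemma slopes0_lb x v : slopes0 x v -> psi 0 - psi (- x) <= v.
Proof.
move=> [t /= t_gt0 <-]; set l := (1 + t)^-1.
have t1_gt0 : 0 < 1 + t by lra.
have l01 : 0 <= l <= 1.
  by rewrite /l invr_ge0 ltW //= invf_le1 //; lra.
have := psi_convex (t *: x) (- x) l01.
have -> : l *: (t *: x) + (1 - l) *: (- x) = (l * t - (1 - l)) *: x.
  by rewrite scalerA scalerN -scalerBl.
have -> : l * t - (1 - l) = 0 by rewrite /l; field; rewrite gt_eqF.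
rewrite scale0r => H; rewrite ler_pdivlMr //.
have : (1 + t) * psi 0 <= (1 + t) * (l * psi (t *: x) + (1 - l) * psi (- x)).
  by rewrite ler_pM2l.
have -> : (1 + t) * (l * psi (t *: x) + (1 - l) * psi (- x)) = psi (t *: x) + t * psi (- x).
  by rewrite /l; field; rewrite gt_eqF.
lra.
Qed.

Lemma dir_deriv0_le x t : 0 < t -> dir_deriv0 x <= (psi (t *: x) - psi 0) / t.
Proof. by move=> t_gt0; apply: inf_le_mem (@slopes0_lb x) _; exists t. Qed.

Lemma slopes0_neq0 x : slopes0 x !=set0.
Proof. by exists ((psi (1 *: x) - psi 0) / 1), 1 => /=. Qed.

Lemma dir_deriv0_sublinear : sublinear dir_deriv0.
Proof.
split => [x y|a x a_gt0].
- rewrite -[dir_deriv0 x]mul1r -[dir_deriv0 y]mul1r.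
  apply: le_inf_comb (@slopes0_lb x) (@slopes0_lb y) ler01 ler01
    (slopes0_neq0 x) (slopes0_neq0 y) _ => _ _ [t /= t_gt0 <-] [s /= s_gt0 <-].
  rewrite !mul1r; have ts_gt0 : 0 < t + s by lra.
  (* [u (x + y)] is a convex combination of [t x] and [s y] *)
  set u := t * s / (t + s); set l := s / (t + s).
  have u_gt0 : 0 < u by rewrite divr_gt0 // mulr_gt0.
  have l01 : 0 <= l <= 1.
    by apply/andP; split; [rewrite divr_ge0 // ltW | rewrite ler_pdivrMr //; lra].
  apply: le_trans (dir_deriv0_le _ u_gt0) _.
  have := psi_convex (t *: x) (s *: y) l01.
  have -> : l *: (t *: x) + (1 - l) *: (s *: y) = u *: (x + y).
    by rewrite !scalerA scalerDr; congr (_ *: _ + _ *: _);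
      rewrite /l /u; field; rewrite gt_eqF.
  move=> psi_u; rewrite ler_pdivrMr //.
  have -> : ((psi (t *: x) - psi 0) / t + (psi (s *: y) - psi 0) / s) * u =
      l * (psi (t *: x) - psi 0) + (1 - l) * (psi (s *: y) - psi 0).
    by rewrite /l /u; field; rewrite !gt_eqF.
  lra.
- apply: le_scale_inf (@slopes0_lb x) (ltW a_gt0) (slopes0_neq0 x) _ => _ [s /= s_gt0 <-].
  have sa_gt0 : 0 < s / a by rewrite divr_gt0.
  apply: le_trans (dir_deriv0_le _ sa_gt0) _.
  rewrite scalerA mulfVK ?gt_eqF //.
  suff -> : (psi (s *: x) - psi 0) / (s / a) = a * ((psi (s *: x) - psi 0) / s) by [].
  by field; rewrite !gt_eqF.
Qed.

Lemma convex_linear_minorant :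
  exists L, linear_functional L /\ forall x, L x <= psi x - psi 0.
Proof.
have [L [L_lin LP]] := hahn_banach dir_deriv0_sublinear.
exists L; split => // x; apply: le_trans (LP x) _.
by have := dir_deriv0_le x ltr01; rewrite scale1r divr1.
Qed.

End DirectionalDerivative.

(** * Moreau envelopes and a duality for the half squared norm *)

Section NormedSpace.
Variables (R : realType) (V : normedModType R).
Implicit Types (u w x y z : V) (D : set V) (K L : V -> R).

Lemma sqr_norm_convex u w (l : R) : 0 <= l <= 1 ->
  `|l *: u + (1 - l) *: w| ^+ 2 <= l * `|u| ^+ 2 + (1 - l) * `|w| ^+ 2.
Proof.
move=> /andP[l_ge0 l_le1]; have l'_ge0 : 0 <= 1 - l by lra.
have := ler_normD (l *: u) ((1 - l) *: w).
rewrite !normrZ !ger0_norm //.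
have := normr_ge0 u; have := normr_ge0 w; have := normr_ge0 (l *: u + (1 - l) *: w).
set a := `|u|; set b := `|w|; set c := `|_ + _|; move=> c_ge0 b_ge0 a_ge0 tri.
have : c ^+ 2 <= (l * a + (1 - l) * b) ^+ 2.
  by rewrite lerXn2r // ?nnegrE // addr_ge0 // mulr_ge0.
(* the gap is l (1 - l) (a - b)^2 *)
have := mulr_ge0 (mulr_ge0 l_ge0 l'_ge0) (sqr_ge0 (a - b)).
rewrite !expr2; nra.
Qed.

Definition convex_on D K := forall x y (l : R), D x -> D y -> 0 <= l <= 1 ->
  D (l *: x + (1 - l) *: y) /\ K (l *: x + (1 - l) *: y) <= l * K x + (1 - l) * K y.

Lemma linear_functional_norm_le L (C : R) : linear_functional L ->
  (forall v, `|v| <= 1 -> L v <= C) -> forall v, `|L v| <= C * `|v|.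
Proof.
move=> [LD LZ] L_le v; have [->|v_neq0] := eqVneq v 0.
  by have := LZ 0 0; rewrite scale0r mul0r => ->; rewrite !normr0 mulr0.
have v_gt0 : 0 < `|v| by rewrite normr_gt0.
set w := `|v|^-1 *: v.
have w1 : `|w| = 1 by rewrite normrZ ger0_norm ?invr_ge0 // mulVf ?gt_eqF.
have vw : v = `|v| *: w by rewrite scalerA mulfV ?gt_eqF // scale1r.
rewrite {1}vw LZ normrM normr_id mulrC ler_pM2r // ler_norml.
have := L_le (- w); rewrite normrN w1 -scaleN1r LZ; have := L_le w; rewrite w1; lra.
Qed.

Lemma linear_functional_continuous L (C : R) : linear_functional L ->
  (forall v, `|v| <= 1 -> L v <= C) -> continuous L.
Proof.
move=> L_lin L_le; have L_bound := linear_functional_norm_le L_lin L_le.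
have L_linear : linear (L : V -> R^o) by move=> a x y; rewrite L_lin.1 L_lin.2.
pose Lm : {linear V -> R^o} := HB.pack (L : V -> R^o)
  (GRing.isLinear.Build _ _ _ _ (L : V -> R^o) L_linear).
suff : continuous Lm by [].
apply/bounded_linear_continuous/linear_boundedP; near=> r => x.
by apply: le_trans (L_bound x) _; apply: ler_wpM2r.
Unshelve. all: by end_near.
Qed.

Section Envelope.
Variables (D : set V) (K : V -> R).
Hypothesis K_convex : convex_on D K.
Hypothesis K_lb : forall z, D z -> 0 <= K z + `|z| ^+ 2 / 2.
Variable z0 : V.
Hypothesis D_z0 : D z0.

Definition envelope x := inf [set K z + `|z - x| ^+ 2 / 2 | z in D].

(* Convexity at the midpoint of [z] and [z0] bounds [K z] below. *)
Lemma envelope_set_lb x v : [set K z + `|z - x| ^+ 2 / 2 | z in D] v ->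
  - (K z0 + `|z0 + x| ^+ 2 / 2) <= v.
Proof.
move=> [z Dz <-]; have half01 : 0 <= (2^-1 : R) <= 1.
  by rewrite invr_ge0 invf_le1 //=; lra.
have [D_mid K_mid] := K_convex Dz D_z0 half01.
have half : 1 - 2^-1 = 2^-1 :> R by field.
have := sqr_norm_convex (z - x) (z0 + x) half01.
rewrite half -scalerDr addrACA addNr addr0 scalerDr => norm_mid.
have := K_lb D_mid; rewrite half in K_mid *; lra.
Qed.

Lemma envelope_le x z : D z -> envelope x <= K z + `|z - x| ^+ 2 / 2.
Proof. by move=> Dz; apply: inf_le_mem (@envelope_set_lb x) _; exists z. Qed.

Lemma envelope_set_neq0 x : [set K z + `|z - x| ^+ 2 / 2 | z in D] !=set0.
Proof. by exists (K z0 + `|z0 - x| ^+ 2 / 2), z0. Qed.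

Lemma envelope0_ge0 : 0 <= envelope 0.
Proof.
by apply: lb_le_inf (envelope_set_neq0 0) _ => _ [z Dz <-]; rewrite subr0; exact: K_lb.
Qed.

Lemma envelope_convex x y (l : R) : 0 <= l <= 1 ->
  envelope (l *: x + (1 - l) *: y) <= l * envelope x + (1 - l) * envelope y.
Proof.
move=> l01; have /andP[l_ge0 l_le1] := l01; have l'_ge0 : 0 <= 1 - l by lra.
apply: le_inf_comb (@envelope_set_lb x) (@envelope_set_lb y) l_ge0 l'_ge0
  (envelope_set_neq0 x) (envelope_set_neq0 y) _ => _ _ [z1 D1 <-] [z2 D2 <-].
have [Dz Kz] := K_convex D1 D2 l01; apply: le_trans (envelope_le _ Dz) _.
have -> : l *: z1 + (1 - l) *: z2 - (l *: x + (1 - l) *: y) =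
    l *: (z1 - x) + (1 - l) *: (z2 - y) by rewrite !scalerBr opprD addrACA.
by have := sqr_norm_convex (z1 - x) (z2 - y) l01; lra.
Qed.

End Envelope.
End NormedSpace.

Section HalfSqrNormDuality.
Variables (R : realType) (B : completeNormedModType R) (bf : B -> B -> R).

Lemma half_sqr_norm_le_conjugate d (A : R) :
  (forall (a : R) x, bf (a *: x) d = a * bf x d) -> dual_norm_eq bf d ->
  (forall w, bf w d - `|w| ^+ 2 / 2 <= A) -> `|d| ^+ 2 / 2 <= A.
Proof.
move=> bfZ [_ d_norm] A_ge; apply: (le_of_sub_eps (normr_ge0 d)) => e /andP[e_gt0 _].
have [x [x_le1 x_gt]] := d_norm e e_gt0.
pose s := `|d| * Num.sg (bf x d).
have bf_sx : bf (s *: x) d = `|d| * `|bf x d| by rewrite bfZ -mulrA -normrEsg.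
have sg_le1 : `|Num.sg (bf x d)| <= 1 by rewrite normr_sg lern1 leq_b1.
have sx_le : `|s *: x| <= `|d|.
  by rewrite normrZ normrM normr_id -mulrA ler_piMr // mulr_ile1.
have := A_ge (s *: x); rewrite bf_sx.
have : `|d| * (`|d| - e) <= `|d| * `|bf x d| by rewrite ler_wpM2l // ltW.
have : `|s *: x| ^+ 2 <= `|d| ^+ 2 by rewrite lerXn2r ?nnegrE.
lra.
Qed.

Hypothesis bf_linear : forall b, cont_linear_functional (fun x => bf x b).
Hypothesis bf_dual_norm : forall b, dual_norm_eq bf b.
Hypothesis bf_onto : forall phi, cont_linear_functional phi ->
  exists b, forall x, phi x = bf x b.

(* [L] is a linear minorant of the envelope of [K] (Hahn-Banach), the envelope
   bounds [L] on the unit ball, and the representative [d] of [L] does the job. *)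
Lemma half_sqr_norm_duality (D : set B) (K : B -> R) : convex_on D K ->
  (forall z, D z -> 0 <= K z + `|z| ^+ 2 / 2) ->
  exists d, forall z, D z -> bf z d + `|d| ^+ 2 / 2 <= K z.
Proof.
move=> K_convex K_lb.
have [[z0 D_z0]|D0] := pselect (exists z, D z); last first.
  by exists 0 => z Dz; case: D0; exists z.
have [L [L_lin L_le]] := convex_linear_minorant (envelope_convex K_convex K_lb D_z0).
have L_le_K x z : D z -> L x <= K z + `|z - x| ^+ 2 / 2.
  move=> Dz; apply: le_trans (L_le x) _.
  by have := envelope0_ge0 K_lb D_z0; have := envelope_le K_convex K_lb D_z0 x Dz; lra.
have L_cont : continuous L.
  apply: (@linear_functional_continuous _ _ _ (K z0 + (`|z0| + 1) ^+ 2 / 2)) => // v v1.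
  apply: le_trans (L_le_K v z0 D_z0) _.
  rewrite lerD2l ler_pM2r // lerXn2r ?nnegrE ?addr_ge0 //.
  by apply: le_trans (ler_normB _ _) _; rewrite lerD2l.
have [d Ld] := bf_onto (conj L_lin.1 (conj L_lin.2 L_cont)).
exists d => z Dz; suff : `|d| ^+ 2 / 2 <= K z - bf z d by lra.
apply: half_sqr_norm_le_conjugate (bf_linear d).2.1 (bf_dual_norm d) _ => w.
have := L_le_K (z + w) z Dz; rewrite L_lin.1 !Ld opprD addrA subrr sub0r normrN; lra.
Qed.

End HalfSqrNormDuality.

(** * Convex hulls of extended-real functions *)

Lemma ge0_mule_neqNy (R : realType) (r : R) (y : \bar R) : 0 <= r -> y != -oo%E ->
  (r%:E * y != -oo)%E.
Proof.
move=> r_ge0; case: y => [s||] // _.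
have [->|r_neq0] := eqVneq r 0; first by rewrite mul0e.
by rewrite gt0_muley // lte_fin lt_def r_neq0.
Qed.

Section ProperConvex.
Variables (R : realType) (B : completeNormedModType R) (f : B -> \bar R).
Hypothesis f_convex : proper_convex f.

Lemma proper_convex_dom : convex_on [set x | f x != +oo%E] (fun x => fine (f x)).
Proof.
move=> x y l Dx Dy l01; have := f_convex.2 x y l l01.
have fin z : f z != +oo%E -> f z = (fine (f z))%:E.
  by move=> Dz; rewrite fineK // fin_numE Dz f_convex.1.
rewrite (fin _ Dx) (fin _ Dy) -!EFinM -EFinD => le_comb.
have Dc : f (l *: x + (1 - l) *: y) != +oo%E.
  by apply: contra_leT le_comb; rewrite negbK => /eqP ->; rewrite ltey.
by split => //; move: le_comb; rewrite (fin _ Dc) lee_fin.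
Qed.

Lemma convex_conic (a b : R) y1 y2 : 0 <= a -> 0 <= b ->
  exists y, a *: y1 + b *: y2 = (a + b) *: y /\
    ((a + b)%:E * f y <= a%:E * f y1 + b%:E * f y2)%E.
Proof.
move=> a_ge0 b_ge0; have [ab0|ab_neq0] := eqVneq (a + b) 0.
  have [-> ->] : a = 0 /\ b = 0 by lra.
  by exists y1; rewrite add0r !scale0r addr0 !mul0e adde0.
have ab_gt0 : 0 < a + b by rewrite lt_def ab_neq0 addr_ge0.
set mu := a / (a + b).
have mu01 : 0 <= mu <= 1.
  by apply/andP; split; [exact: divr_ge0 a_ge0 (ltW ab_gt0) | rewrite ler_pdivrMr //; lra].
have mu' : 1 - mu = b / (a + b) by rewrite /mu; field.
exists (mu *: y1 + (1 - mu) *: y2); split.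
  by rewrite scalerDr !scalerA mu' /mu; congr (_ *: _ + _ *: _); field.
have ab_ge0 : (0 <= (a + b)%:E)%E by rewrite lee_fin ltW.
apply: le_trans (lee_wpmul2l ab_ge0 (f_convex.2 y1 y2 mu mu01)) _.
have [mu_ge0 mu'_ge0] : 0 <= mu /\ 0 <= 1 - mu by case/andP: mu01; split => //; lra.
rewrite muleDr //; last first.
  by apply: ltninfty_adde_def; rewrite inE ltNye ge0_mule_neqNy ?f_convex.1.
rewrite !muleA -!EFinM mu' /mu.
have -> : (a + b) * (a / (a + b)) = a by field.
by have -> : (a + b) * (b / (a + b)) = b by field.
Qed.

Section Hull.
Variables (e : B) (r : R).

(* [(x, v)] lies above a point of the segment from [(e, r)] to the graph of [f];
   for [t = 1] the convention [0 * +oo = 0] makes [y] irrelevant. *)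
Definition hull_epi x v := exists t y, 0 <= t <= 1 /\ x = t *: e + (1 - t) *: y /\
  ((t * r)%:E + (1 - t)%:E * f y <= v%:E)%E.

Lemma hull_epi_point : hull_epi e r.
Proof.
exists 1, 0; split; first by rewrite lexx ler01.
by rewrite subrr scale0r scale1r addr0 mul0e adde0 mul1r.
Qed.

Lemma hull_epi_graph x v : f x = v%:E -> hull_epi x v.
Proof.
move=> fx; exists 0, x; split; first by rewrite lexx ler01.
by rewrite scale0r add0r subr0 scale1r mul0r add0e mul1e fx.
Qed.

Lemma hull_epi_comb x1 x2 v1 v2 (l : R) : 0 <= l <= 1 ->
  hull_epi x1 v1 -> hull_epi x2 v2 ->
  hull_epi (l *: x1 + (1 - l) *: x2) (l * v1 + (1 - l) * v2).
Proof.
move=> /andP[l_ge0 l_le1] [t1 [y1 [/andP[t1_ge0 t1_le1] [-> le1]]]]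
  [t2 [y2 [/andP[t2_ge0 t2_le1] [-> le2]]]].
set a := l * (1 - t1); set b := (1 - l) * (1 - t2); set T := l * t1 + (1 - l) * t2.
have a_ge0 : 0 <= a by rewrite mulr_ge0 // subr_ge0.
have b_ge0 : 0 <= b by rewrite mulr_ge0 // subr_ge0.
have ab : a + b = 1 - T by rewrite /a /b /T; ring.
have [y [y_eq fy_le]] := convex_conic y1 y2 a_ge0 b_ge0.
exists T, y; split; first by apply/andP; split; rewrite /T; nra.
split.
  rewrite -ab -y_eq !scalerDr !scalerA scalerDl -!addrA; congr (_ + _).
  by rewrite addrCA.
rewrite -ab; apply: le_trans (leeD2l _ fy_le) _.
have -> : ((T * r)%:E + (a%:E * f y1 + b%:E * f y2) =
    l%:E * ((t1 * r)%:E + (1 - t1)%:E * f y1) +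
    (1 - l)%:E * ((t2 * r)%:E + (1 - t2)%:E * f y2))%E.
  rewrite !muleDr ?fin_num_adde_defr // !muleA -!EFinM addeACA -EFinD.
  by rewrite /T !mulrA -mulrDl.
rewrite [leRHS]EFinD ![in leRHS]EFinM.
by apply: leeD; apply: lee_wpmul2l => //; rewrite lee_fin; lra.
Qed.

End Hull.
End ProperConvex.

Section EpigraphInf.
Variables (R : realType) (B : completeNormedModType R) (G : B -> set R) (m : B -> R).
Hypothesis G_lb : forall x v, G x v -> m x <= v.
Hypothesis G_comb : forall x1 x2 v1 v2 (l : R), 0 <= l <= 1 -> G x1 v1 -> G x2 v2 ->
  G (l *: x1 + (1 - l) *: x2) (l * v1 + (1 - l) * v2).

Definition epi_inf x : \bar R := ereal_inf [set v%:E | v in G x].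

Lemma epi_inf_fin x : G x !=set0 -> epi_inf x = (inf (G x))%:E.
Proof. by move=> Gx0; apply: ereal_inf_EFin => //; exists (m x) => v /G_lb. Qed.

Lemma epi_inf_pinfty x : ~ (G x !=set0) -> epi_inf x = +oo%E.
Proof.
move=> Gx0; rewrite /epi_inf; suff -> : G x = set0 by rewrite image_set0 ereal_inf0.
by apply/seteqP; split => // v Gv; apply: Gx0; exists v.
Qed.

Lemma epi_inf_le x v : G x v -> (epi_inf x <= v%:E)%E.
Proof. by move=> Gv; apply: ereal_inf_lbound; exists v. Qed.

Lemma epi_inf_ge x : ((m x)%:E <= epi_inf x)%E.
Proof.
have [Gx|Gx] := pselect (G x !=set0); last by rewrite epi_inf_pinfty ?leey.
by rewrite epi_inf_fin // lee_fin; apply: lb_le_inf => // v /G_lb.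
Qed.

Lemma epi_inf_neq_ninfty x : epi_inf x != -oo%E.
Proof. by apply: contraTneq (epi_inf_ge x) => ->; rewrite leeNy_eq. Qed.

Lemma epi_inf_convex : proper_convex epi_inf.
Proof.
split => [|x1 x2 l l01]; first exact: epi_inf_neq_ninfty.
have /andP[l_ge0 l_le1] := l01.
have [G1|G1] := pselect (G x1 !=set0); last first.
  have [->|l_neq0] := eqVneq l 0.
    by rewrite scale0r add0r subr0 scale1r mul0e add0e mul1e.
  rewrite (epi_inf_pinfty G1) gt0_muley ?lte_fin ?lt_def ?l_neq0 // addye ?leey //.
  by apply: ge0_mule_neqNy; [lra | exact: epi_inf_neq_ninfty].
have [G2|G2] := pselect (G x2 !=set0); last first.
  have [->|l_neq1] := eqVneq l 1.
    by rewrite scale1r subrr scale0r addr0 mul1e mul0e adde0.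
  rewrite (epi_inf_pinfty G2) gt0_muley; last by rewrite lte_fin subr_gt0 lt_neqAle l_neq1.
  rewrite addey ?leey //.
  by apply: ge0_mule_neqNy => //; exact: epi_inf_neq_ninfty.
have [v1 Gv1] := G1; have [v2 Gv2] := G2; have l'_ge0 : 0 <= 1 - l by lra.
rewrite (epi_inf_fin G1) (epi_inf_fin G2) epi_inf_fin; last first.
  by exists (l * v1 + (1 - l) * v2); exact: G_comb.
rewrite -!EFinM -EFinD lee_fin.
apply: le_inf_comb (@G_lb x1) (@G_lb x2) l_ge0 l'_ge0 G1 G2 _ => u1 u2 Gu1 Gu2.
exact: inf_le_mem (@G_lb _) (G_comb l01 Gu1 Gu2).
Qed.

End EpigraphInf.

(** * Minimal convex majorants of q *)

Section QuadraticForm.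
Variables (R : realType) (B : completeNormedModType R) (bf : B -> B -> R).
Hypothesis bf_sym : sym_bilinear bf.
Local Notation q := (qform bf).

Lemma bfDl x y z : bf (x + y) z = bf x z + bf y z. Proof. exact: bf_sym.1. Qed.
Lemma bfZl (a : R) x y : bf (a *: x) y = a * bf x y. Proof. exact: bf_sym.2.1. Qed.
Lemma bfC x y : bf x y = bf y x. Proof. exact: bf_sym.2.2. Qed.
Lemma bfDr x y z : bf z (x + y) = bf z x + bf z y.
Proof. by rewrite bfC bfDl bfC (bfC y). Qed.
Lemma bfZr (a : R) x y : bf y (a *: x) = a * bf y x.
Proof. by rewrite bfC bfZl bfC. Qed.
Lemma bfNl x y : bf (- x) y = - bf x y.
Proof. by rewrite -scaleN1r bfZl mulN1r. Qed.
Lemma bfNr x y : bf y (- x) = - bf y x.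
Proof. by rewrite bfC bfNl bfC. Qed.

Definition bfE := (bfDl, bfDr, bfZl, bfZr, bfNl, bfNr).

Lemma qformD x y : q (x + y) = q x + bf x y + q y.
Proof. by rewrite /qform !bfE (bfC y x); field. Qed.

Lemma qformB x y : q (x - y) = q x - bf x y + q y.
Proof. by rewrite /qform !bfE (bfC y x); field. Qed.

Lemma qformN x : q (- x) = q x.
Proof. by rewrite /qform !bfE opprK. Qed.

Lemma qform_comb (t : R) x y : q (t *: x + (1 - t) *: y) =
  t ^+ 2 * q x + t * (1 - t) * bf x y + (1 - t) ^+ 2 * q y.
Proof. by rewrite /qform !bfE (bfC y x); field. Qed.

Lemma qform_ge x : dual_norm_eq bf x -> - (`|x| ^+ 2 / 2) <= q x.
Proof.
move=> [x_norm _]; have := x_norm x; rewrite ler_norml => /andP[+ _].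
by rewrite /qform expr2; lra.
Qed.

Lemma Phi_convex (M : set B) : M !=set0 -> proper_convex (Phi bf M).
Proof.
move=> [a0 Ma0]; split=> [x|x y l /andP[l_ge0 l_le1]].
  have : ((bf x a0 - q a0)%:E <= Phi bf M x)%E by apply: ereal_sup_ubound; exists a0.
  by apply: contraTneq => ->; rewrite leeNy_eq.
apply: ge_ereal_sup => _ [a Ma <-].
have -> : bf (l *: x + (1 - l) *: y) a - q a =
    l * (bf x a - q a) + (1 - l) * (bf y a - q a) by rewrite bfDl !bfZl; ring.
rewrite EFinD !EFinM; apply: leeD; apply: lee_wpmul2l; rewrite ?lee_fin ?subr_ge0 //;
  by apply: ereal_sup_ubound; exists a.
Qed.

End QuadraticForm.

Section MinimalMajorant.
Variables (R : realType) (B : completeNormedModType R) (bf : B -> B -> R).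
Hypothesis bf_sym : sym_bilinear bf.
Variable f : B -> \bar R.
Hypothesis f_min : minimal_convex_majorant_q bf f.
Local Notation q := (qform bf).

Let f_proper := f_min.1.1.
Let f_ge_q := f_min.1.2.

Lemma fine_dom x : f x != +oo%E -> f x = (fine (f x))%:E.
Proof. by move=> Dx; rewrite fineK // fin_numE Dx f_proper.1. Qed.

Section Contact.
Variable e : B.
Hypothesis f_ge_aff : forall c, ((bf c e - q e)%:E <= f c)%E.

Lemma hull_epi_ge_q x v : hull_epi f e (q e) x v -> q x <= v.
Proof.
move=> [t [y [/andP[t_ge0 t_le1] [-> le_v]]]].
have [t1|t_neq1] := eqVneq t 1.
  by move: le_v; rewrite t1 subrr scale0r addr0 scale1r mul0e adde0 mul1r lee_fin.
have t'_gt0 : 0 < 1 - t by rewrite subr_gt0 lt_neqAle t_neq1.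
move: le_v (f_ge_q y) (f_ge_aff y) (f_proper.1 y); case: (f y) => [Fy||] //; last first.
  by rewrite gt0_muley ?lte_fin // addey.
rewrite -EFinM -EFinD !lee_fin => le_v q_le aff_le _.
apply: le_trans le_v; rewrite qform_comb // (bfC bf_sym e y).
have gap1 : 0 <= (1 - t) * t * (Fy - (bf y e - q e)).
  by rewrite !mulr_ge0 ?subr_ge0 // ltW.
have gap2 : 0 <= (1 - t) * (1 - t) * (Fy - q y) by rewrite !mulr_ge0 ?subr_ge0 // ltW.
rewrite !expr2; nra.
Qed.

Lemma contact_of_affine_minorant : f e = (q e)%:E.
Proof.
pose g := epi_inf (hull_epi f e (q e)).
have g_convex : proper_convex g.
  exact: epi_inf_convex hull_epi_ge_q (@hull_epi_comb _ _ _ f_proper e (q e)).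
have g_le_f x : (g x <= f x)%E.
  have [Dx|] := boolP (f x != +oo%E); last by rewrite negbK => /eqP ->; exact: leey.
  by rewrite fine_dom //; apply: epi_inf_le; apply: hull_epi_graph; exact: fine_dom.
have g_eq_f := f_min.2 g (conj g_convex (epi_inf_ge hull_epi_ge_q)) g_le_f.
apply/le_anti; rewrite f_ge_q andbT -g_eq_f.
exact/epi_inf_le/hull_epi_point.
Qed.

End Contact.

Lemma affine_minorant_of_contact a b : f a = (q a)%:E -> ((bf b a - q a)%:E <= f b)%E.
Proof.
move=> fa; have [Db|] := boolP (f b != +oo%E); last by rewrite negbK => /eqP ->; exact: leey.
have Da : f a != +oo%E by rewrite fa.
rewrite (fine_dom Db) lee_fin; set X := bf b a - q a.
(* [q <= f] on the segment from [a] to [b], as the point approaches [a] *)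
apply: (@le_of_sub_eps _ _ _ `|X - q b| (normr_ge0 _)) => s /andP[s_gt0 s_le1].
have s01 : 0 <= 1 - s <= 1 by apply/andP; split; lra.
have ss : 1 - (1 - s) = s by ring.
have [Dc Fc] := proper_convex_dom f_proper Da Db s01.
rewrite fa ss /= in Fc.
have q_seg := f_ge_q ((1 - s) *: a + (1 - (1 - s)) *: b).
rewrite (fine_dom Dc) lee_fin qform_comb // (bfC bf_sym a b) ss in q_seg.
have abs_le : s * (s * (X - q b)) <= s * (s * `|X - q b|) by rewrite !ler_pM2l // ler_norm.
by rewrite -(ler_pM2l s_gt0); rewrite /X !expr2 in abs_le q_seg *; nra.
Qed.

Hypothesis bf_linear : forall b, cont_linear_functional (fun x => bf x b).
Hypothesis bf_dual_norm : forall b, dual_norm_eq bf b.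
Hypothesis bf_onto : forall phi, cont_linear_functional phi ->
  exists b, forall x, phi x = bf x b.

(* Shifting by [b] and subtracting the affine part of [q] turns [f >= q] into
   [K >= - `|.|^2 / 2]; the duality lemma then yields the point [e = d + b]. *)
Lemma exists_contact_point b : exists a, f a = (q a)%:E /\ q (b - a) <= 0.
Proof.
pose D z := f (z + b) != +oo%E.
pose K z := fine (f (z + b)) - bf z b - q b.
have K_convex : convex_on D K.
  move=> x y l Dx Dy l01; have := proper_convex_dom f_proper Dx Dy l01.
  rewrite !scalerDr addrACA -scalerDl subrKC scale1r => -[Dc Fc].
  by split => //; rewrite /K (bfDl bf_sym) !(bfZl bf_sym); lra.
have K_lb z : D z -> 0 <= K z + `|z| ^+ 2 / 2.
  move=> Dz; have := f_ge_q (z + b); rewrite (fine_dom Dz) lee_fin qformD //.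
  by have := qform_ge (bf_dual_norm z); rewrite /K; lra.
have [d d_le] := half_sqr_norm_duality bf_linear bf_dual_norm bf_onto K_convex K_lb.
have q_d := qform_ge (bf_dual_norm d).
have f_ge_aff c : ((bf c (d + b) - q (d + b))%:E <= f c)%E.
  have [Dc|] := boolP (f c != +oo%E); last by rewrite negbK => /eqP ->; exact: leey.
  have := d_le (c - b); rewrite /D /K subrK => /(_ Dc); rewrite (fine_dom Dc) lee_fin.
  by rewrite qformD // !(bfE bf_sym) (bfC bf_sym b d) /=; move: q_d; rewrite /qform; lra.
have fe := contact_of_affine_minorant f_ge_aff.
exists (d + b); split => //.
have := d_le d; rewrite /D /K fe /= qformD // => /(_ isT).
rewrite opprD addrCA subrr addr0 qformN // /qform; have := sqr_ge0 `|d|; lra.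
Qed.

Definition contact := [set a | f a = (q a)%:E].

Lemma contact_neq0 : contact !=set0.
Proof. by have [a [fa _]] := exists_contact_point 0; exists a. Qed.

Lemma Phi_contact_le b : (Phi bf contact b <= f b)%E.
Proof. by apply: ge_ereal_sup => _ [a Ma <-]; exact: affine_minorant_of_contact. Qed.

Lemma qform_le_Phi_contact b : ((q b)%:E <= Phi bf contact b)%E.
Proof.
have [a [fa q_le0]] := exists_contact_point b.
apply: (@le_trans _ _ (bf b a - q a)%:E); last by apply: ereal_sup_ubound; exists a.
by rewrite lee_fin; move: q_le0; rewrite qformB //; lra.
Qed.

Lemma Phi_contact : Phi bf contact = f.
Proof.
apply: f_min.2 Phi_contact_le; split; last exact: qform_le_Phi_contact.
exact: Phi_convex contact_neq0.
Qed.

Lemma contact_max_q_positive : max_q_positive bf contact.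
Proof.
split=> [|A [_ A_pos] sub_A].
  split=> [|a c Ma Mc]; first exact: contact_neq0.
  by have := affine_minorant_of_contact a Mc; rewrite Ma lee_fin qformB //; lra.
apply/seteqP; split => // c Ac; apply/le_anti; rewrite f_ge_q andbT -Phi_contact.
apply: ge_ereal_sup => _ [a Ma <-]; rewrite lee_fin.
by have := A_pos c a Ac (sub_A a Ma); rewrite qformB //; lra.
Qed.

End MinimalMajorant.

Theorem mainTheorem16 (R : realType) (B : completeNormedModType R)
  (bf : B -> B -> R) (f : B -> \bar R) :
  is_SSDB bf -> minimal_convex_majorant_q bf f ->
  exists M : set B, max_q_positive bf M /\ f = Phi bf M.
Proof.
move=> [_ [bf_sym [bf_linear [bf_dual_norm bf_onto]]]] f_min.
exists (contact bf f); split.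
- exact: (contact_max_q_positive bf_sym f_min bf_linear bf_dual_norm bf_onto).
- by rewrite (Phi_contact bf_sym f_min bf_linear bf_dual_norm bf_onto).
Qed.
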